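(* Fix a thresholding parameter $\omega>0$ and let $\theta$ be a real-valued random variable with some distribution $\mathcal{P}_\theta$. For a relaxing parameter $\xi^2>0$, let $\tilde\theta$ be a random variable with $\tilde\theta \mid \theta \sim \mathrm{N}(\theta,\xi^2)$, and define $T_r(\theta,\omega,\xi^2)=\theta\cdot I(|\tilde\theta|>\omega)$ (relaxed thresholding), $T_h(\theta,\omega)=\theta\cdot I(|\theta|>\omega)$ (hard thresholding), and $T_s(\theta,\omega)=\operatorname{sgn}(\theta)(|\theta|-\omega)\cdot I(|\theta|>\omega)$ (soft thresholding), where $I(\cdot)$ is the indicator function. Let $\theta^\star=\theta+\omega$ when $\theta>0$ and $\theta^\star=\theta-\omega$ when $\theta<0$. Then for any $\epsilon>0$ there exist values of $\xi^2$ such that $\Pr\left(|T_r(\theta,\omega,\xi^2)-T_h(\theta,\omega)|<\epsilon\right)>0$, $\Pr\left(|T_r(\theta,\omega,\xi^2)-\theta|<\epsilon\right)>0$, and $\Pr\left(|T_r(\theta,\omega,\xi^2)-T_s(\theta^\star,\omega)|<\epsilon\right)>0$. Furthermore, $\lim_{\xi^2\to 0}T_r(\theta,\omega,\xi^2)=T_h(\theta,\omega)$ and $\lim_{\xi^2\to\infty}T_r(\theta,\omega,\xi^2)=\theta$.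
   Context: This is the scalar version of the relaxed-thresholded Gaussian process: given a kernel $\kappa$, $\omega\ge 0$ and $\xi>0$, if $f\sim\mathrm{GP}(0,\kappa)$ and $\tilde f(x)\sim\mathrm{N}(f(x),\xi^2)$ independently across $x$, then $g(x)=f(x)I(|\tilde f(x)|>\omega)$ is called a relaxed-thresholded Gaussian process. Here $\theta$ plays the role of $f(x)$ and $\tilde\theta$ the role of $\tilde f(x)$; $\xi^2$ is the relaxing parameter. *)

From HB Require Import structures.
From mathcomp Require Import all_boot all_order all_algebra.
From mathcomp Require Import all_classical all_reals all_analysis.
Set Implicit Arguments. Unset Strict Implicit. Unset Printing Implicit Defensive.
Import Order.TTheory GRing.Theory Num.Theory.
Import numFieldNormedType.Exports.
Local Open Scope classical_set_scope.
Local Open Scope ring_scope.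

Definition indep2 d (T : measurableType d) (R : realType) (P : probability T R)
  (X Y : T -> R) : Prop :=
  forall A B : set R, measurable A -> measurable B ->
    P (X @^-1` A `&` Y @^-1` B) = (P (X @^-1` A) * P (Y @^-1` B))%E.

Definition std_normal_RV d (T : measurableType d) (R : realType)
  (P : probability T R) (Z : {RV P >-> R}) : Prop :=
  forall A : set R, measurable A -> distribution P Z A = normal_prob 0 1 A.

Definition ind {R : realType} (b : bool) : R := (b : nat)%:R.

Definition T_h {R : realType} (x w : R) : R := x * ind (w < `|x|).

Definition T_s {R : realType} (x w : R) : R :=
  Num.sg x * (`|x| - w) * ind (w < `|x|).

(* relaxed thresholding  T_r(theta, w, v) = theta I(|theta~| > w) where
   theta~ = theta + sqrt(v) Z, so that theta~ | theta ~ N(theta, v)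
   (v = xi^2 is the relaxing parameter). *)
Definition T_r {R : realType} (theta z w v : R) : R :=
  theta * ind (w < `|theta + Num.sqrt v * z|).

(* theta* = theta + w if theta > 0, theta - w if theta < 0 (and 0 if theta = 0) *)
Definition theta_star {R : realType} (x w : R) : R := x + Num.sg x * w.

From HB Require Import structures.
From mathcomp Require Import all_boot all_order all_algebra.
From mathcomp Require Import all_classical all_reals all_analysis.
From mathcomp Require Import lra.
Import Order.TTheory GRing.Theory Num.Theory.
Import numFieldNormedType.Exports.
Local Open Scope classical_set_scope.
Local Open Scope ring_scope.

(* With relaxing parameter w ^+ 2 the relaxed threshold compares |theta + w Z|
   with w.  For a suitable sign of Z, an interval of values of Z makes T_r agree
   with T_h (resp. with theta) on a region of values of theta, and the mirror
   interval does so on the complementary region.  One of the two regions has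
   positive probability, and then, by independence, so does the corresponding
   rectangle, because the standard normal law charges every nondegenerate
   interval.  Soft thresholding of theta* returns theta, which reduces the third
   claim to the second.  As v -> 0, |theta + sqrt v Z| -> |theta|, so the
   indicator is eventually I(|theta| > w) unless |theta| = w; as v -> +oo,
   |theta + sqrt v Z| -> +oo whenever Z <> 0, which holds almost surely. *)

Lemma normal_prob_itv_gt0 (R : realType) (m s a b : R) :
  s != 0 -> a < b -> (0 < normal_prob m s `[a, b])%E.
Proof.
move=> s0 ab.
pose c := normal_peak s * expR (- ((a - m) ^+ 2 + (b - m) ^+ 2) / (s ^+ 2 *+ 2)).
have c0 : 0 < c by rewrite mulr_gt0 ?expR_gt0 ?normal_peak_gt0.
have sqr_le x : a <= x <= b -> (x - m) ^+ 2 <= (a - m) ^+ 2 + (b - m) ^+ 2.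
  move=> /andP[ax xb]; have := sqr_ge0 (a - m); have := sqr_ge0 (b - m).
  by have [xm | mx] := lerP x m; nra.
apply: (@lt_le_trans _ _ (\int[lebesgue_measure]_(x in `[a, b]) c%:E)%E).
  rewrite integral_cst //= lebesgue_measure_itv /= lte_fin ab -EFinD -EFinM.
  by rewrite lte_fin mulr_gt0 // subr_gt0.
apply: ge0_le_integral => //=.
- by move=> x _; rewrite lee_fin ltW.
- apply/measurable_realfun.measurable_EFinP.
  by apply: measurable_funTS; exact: measurable_normal_pdf.
move=> x; rewrite in_itv /= => /sqr_le x_le.
rewrite normal_pdfE // lee_fin ler_pM2l ?normal_peak_gt0 // /normal_fun ler_expR.
by rewrite !mulNr lerN2 ler_pM2r ?invr_gt0 ?pmulrn_lgt0 ?exprn_even_gt0.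
Qed.

Lemma near_ltr_cvg {R : realFieldType} {T} {F : set_system T} {FF : Filter F}
    {f : T -> R} {l a : R} :
  f @ F --> l -> l != a -> \forall x \near F, (a < f x) = (a < l).
Proof.
move=> fl; case: ltgtP => // [al | la] _.
  by apply: filterS (cvgr_gt _ fl _ al) => x ->.
by apply: filterS (cvgr_lt _ fl _ la) => x /lt_gtF ->.
Qed.

Section thresholding.
Context {R : realType}.
Implicit Types t z w v : R.

Lemma indE (b : bool) : ind b = (if b then 1 else 0 : R).
Proof. by case: b. Qed.

Lemma T_rN t z w v : T_r (- t) (- z) w v = - T_r t z w v.
Proof. by rewrite /T_r mulrN -opprD normrN mulNr. Qed.

Lemma T_hN t w : T_h (- t) w = - T_h t w.
Proof. by rewrite /T_h normrN mulNr. Qed.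

Lemma T_s_theta_star t w : 0 <= w -> T_s (theta_star t w) w = t.
Proof.
move=> w0; rewrite /T_s /theta_star indE.
have [t0|t0|->] := ltrgtP t 0; last by rewrite sgr0 mul0r addr0 sgr0 !mul0r.
- have tw : t - w < 0 by lra.
  rewrite (ltr0_sg t0) mulN1r ltr0_sg // ltr0_norm // ifT; lra.
- have tw : 0 < t + w by lra.
  rewrite (gtr0_sg t0) mul1r gtr0_sg // gtr0_norm // ifT; lra.
Qed.

Lemma T_r_sqr t z w : 0 <= w -> T_r t z w (w ^+ 2) = t * ind (w < `|t + w * z|).
Proof. by move=> w0; rewrite /T_r sqrtr_sqr (ger0_norm w0). Qed.

Lemma T_r_sqr_eq_T_h t z w : 0 <= w -> 0 <= z <= 1 ->
  w < t \/ - w <= t <= 0 -> T_r t z w (w ^+ 2) = T_h t w.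
Proof.
move=> w0 /andP[z0 z1] ht; rewrite T_r_sqr // /T_h.
suff -> : (w < `|t + w * z|) = (w < `|t|) by [].
have [wz0 wz1] : 0 <= w * z /\ w * z <= w by split; nra.
case: ht => [tw | /andP[t1 t2]].
  by rewrite !ltr_normr tw (_ : w < t + w * z) //; lra.
have h1 : - w <= t + w * z <= w by apply/andP; split; lra.
have h2 : - w <= t <= w by apply/andP; split; lra.
by rewrite !ltNge !ler_norml h1 h2.
Qed.

Lemma T_r_sqr_eq_T_h_mirror t z w : 0 <= w -> - 1 <= z <= 0 ->
  t < - w \/ 0 <= t <= w -> T_r t z w (w ^+ 2) = T_h t w.
Proof.
move=> w0 /andP[z0 z1] ht.
rewrite -[t]opprK -[z]opprK T_rN T_hN T_r_sqr_eq_T_h //; first by apply/andP; lra.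
by case: ht => [? | /andP[? ?]]; [left | right; apply/andP]; lra.
Qed.

Lemma T_r_sqr_eq_id t z w : 0 < w -> 0 <= t -> 2 <= z -> T_r t z w (w ^+ 2) = t.
Proof.
move=> w0 t0 z2; rewrite T_r_sqr ?ltW // indE ifT ?mulr1 // ltr_normr.
by rewrite (_ : w < t + w * z) //; nra.
Qed.

Lemma T_r_sqr_eq_id_mirror t z w : 0 < w -> t <= 0 -> z <= - 2 -> T_r t z w (w ^+ 2) = t.
Proof.
move=> w0 t0 z2.
by rewrite -[t]opprK -[z]opprK T_rN T_r_sqr_eq_id ?oppr_ge0 ?opprK // lerNr.
Qed.


Lemma T_r_cvg_T_h t z w : `|t| != w ->
  T_r t z w v @[v --> 0^'+] --> T_h t w.
Proof.
move=> tw.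
have shift_cvg : `|t + Num.sqrt v * z| @[v --> 0^'+] --> `|t|.
  apply: cvg_at_right_filter; apply: cvg_norm.
  have : Num.sqrt v @[v --> 0] --> Num.sqrt (0 : R) by exact: sqrt_continuous.
  rewrite sqrtr0 => /(cvgMr_tmp (b := z)).
  by move/(cvgD (cvg_cst t)); rewrite mul0r addr0.
apply: cvg_near_cst; apply: filterS (near_ltr_cvg shift_cvg tw) => v.
by rewrite /T_r /T_h => ->.
Qed.

Lemma T_r_cvgy t z w : z != 0 -> T_r t z w v @[v --> +oo] --> t.
Proof.
move=> z0; apply: cvg_near_cst.
set c := (`|w| + `|t|) / `|z|.
have c0 : 0 <= c by rewrite divr_ge0 ?addr_ge0.
near=> v.
have cv2 : c ^+ 2 < v by near: v; apply: nbhs_pinfty_gt; exact: num_real.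
have cv : c < Num.sqrt v.
  by rewrite -[c]ger0_norm // -sqrtr_sqr ltr_sqrt // (le_lt_trans (sqr_ge0 c)).
have big : `|w| + `|t| < Num.sqrt v * `|z| by rewrite -ltr_pdivrMr ?normr_gt0.
have shift_ge : Num.sqrt v * `|z| - `|t| <= `|t + Num.sqrt v * z|.
  have := lerB_normD (Num.sqrt v * z) t.
  by rewrite normrM ger0_norm ?sqrtr_ge0 // [_ + t]addrC.
rewrite /T_r indE ifT ?mulr1 //.
by have := ler_norm w; lra.
Unshelve. all: by end_near.
Qed.
End thresholding.

Section relaxed_thresholding_events.
Context {d} {Omega : measurableType d} {R : realType} {P : probability Omega R}.

Lemma prob_gt0_or_setC (A : set Omega) : measurable A ->
  (0 < P A)%E \/ (0 < P (~` A))%E.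
Proof.
move=> mA; have [|PA] := ltP 0%E (P A); [by left | right].
have PA0 : P A = 0%E by apply/le_anti; rewrite PA measure_ge0.
by rewrite probability_setC // PA0 sube0 lte01.
Qed.

Lemma measurable_ind_lt_norm (f : Omega -> R) (w : R) : measurable_fun setT f ->
  measurable_fun setT (fun o => ind (w < `|f o|) : R).
Proof.
move=> mf; under eq_fun do rewrite indE.
apply: measurable_fun_ifT => //.
by apply: measurable_realfun.measurable_fun_ltr => //; exact: measurableT_comp.
Qed.

Lemma measurable_T_r (X Y : Omega -> R) (w v : R) :
  measurable_fun setT X -> measurable_fun setT Y ->
  measurable_fun setT (fun o => T_r (X o) (Y o) w v).
Proof.
move=> mX mY; apply: measurable_realfun.measurable_funM => //.
apply: measurable_ind_lt_norm; apply: measurable_realfun.measurable_funD => //.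
exact: measurable_realfun.measurable_funM.
Qed.

Lemma measurable_T_h (X : Omega -> R) (w : R) : measurable_fun setT X ->
  measurable_fun setT (fun o => T_h (X o) w).
Proof.
move=> mX; apply: measurable_realfun.measurable_funM => //.
exact: measurable_ind_lt_norm.
Qed.

Lemma measurable_dist_lt (f g : Omega -> R) (eps : R) :
  measurable_fun setT f -> measurable_fun setT g ->
  measurable [set o | `|f o - g o| < eps].
Proof.
move=> mf mg.
have mfg : measurable_fun setT (fun o => `|f o - g o|).
  by apply: measurableT_comp => //; exact: measurable_realfun.measurable_funB.
have := mfg measurableT _ (measurable_itv `]-oo, eps[); rewrite setTI.
by congr measurable; apply/seteqP; split => o /=; rewrite in_itv.
Qed.

Context {theta Z : {RV P >-> R}}.
Hypotheses (Z_normal : std_normal_RV Z) (theta_Z_indep : indep2 P theta Z).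

Lemma indep_rect_gt0 (A : set R) (a b : R) (E : set Omega) :
  measurable A -> a < b -> (0 < P (theta @^-1` A))%E -> measurable E ->
  theta @^-1` A `&` Z @^-1` `[a, b] `<=` E -> (0 < P E)%E.
Proof.
move=> mA ab PA mE AabE.
have mrect : measurable (theta @^-1` A `&` Z @^-1` `[a, b]).
  by apply: measurableI; exact: measurable_funPTI.
apply: (@lt_le_trans _ _ (P (theta @^-1` A `&` Z @^-1` `[a, b]))).
  rewrite theta_Z_indep // mule_gt0 //.
  have := Z_normal _ (measurable_itv `[a, b]); rewrite /distribution /pushforward => ->.
  exact: normal_prob_itv_gt0.
by apply: le_measure; rewrite ?inE.
Qed.

Lemma indep_cover_gt0 (A : set R) (a1 b1 a2 b2 : R) (E : set Omega) :
  measurable A -> a1 < b1 -> a2 < b2 -> measurable E ->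
  theta @^-1` A `&` Z @^-1` `[a1, b1] `<=` E ->
  theta @^-1` (~` A) `&` Z @^-1` `[a2, b2] `<=` E -> (0 < P E)%E.
Proof.
move=> mA ab1 ab2 mE AE AcE.
have [PA|PAc] := prob_gt0_or_setC _ (measurable_funPTI theta mA).
  exact: indep_rect_gt0 AE.
by apply: indep_rect_gt0 AcE => //; exact: measurableC.
Qed.

Lemma T_r_near_T_h_gt0 (w eps : R) : 0 < w -> 0 < eps ->
  (0 < P [set o | (`|T_r (theta o) (Z o) w (w ^+ 2) - T_h (theta o) w| < eps)%R])%E.
Proof.
move=> w0 eps0.
(* Shifting theta up by at most w keeps theta > w above the threshold and
   -w <= theta <= 0 below it; the mirror shift handles the complement. *)
apply: (@indep_cover_gt0 (`]w, +oo[ `|` `[- w, 0]) 0 1 (- 1) 0) => //.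
- exact: measurableU.
- by apply: measurable_dist_lt; [apply: measurable_T_r | apply: measurable_T_h].
- move=> o [/= tA]; rewrite in_itv /= => Zo.
  rewrite (T_r_sqr_eq_T_h _ _ _ (ltW w0) Zo) ?subrr ?normr0 //.
  by case: tA => /=; rewrite in_itv /= ?andbT => ?; [left | right].
- move=> o [/= tA]; rewrite in_itv /= => Zo.
  rewrite (T_r_sqr_eq_T_h_mirror _ _ _ (ltW w0) Zo) ?subrr ?normr0 //.
  move: tA; rewrite /= !in_itv /= andbT => /not_orP[/negP + /negP].
  rewrite -leNgt negb_and -!ltNge => tw /orP[? | ?]; first by left.
  by right; apply/andP; split; lra.
Qed.

Lemma T_r_near_id_gt0 (w eps : R) : 0 < w -> 0 < eps ->
  (0 < P [set o | (`|T_r (theta o) (Z o) w (w ^+ 2) - theta o| < eps)%R])%E.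
Proof.
move=> w0 eps0.
apply: (@indep_cover_gt0 `[0, +oo[ 2 3 (- 3) (- 2)) => //; [lra | lra | | |].
- by apply: measurable_dist_lt; [apply: measurable_T_r | ].
- move=> o [/=]; rewrite !in_itv /= andbT => t0 /andP[z2 _].
  by rewrite T_r_sqr_eq_id ?subrr ?normr0.
- move=> o [/=]; rewrite !in_itv /= andbT => /negP; rewrite -ltNge => t0 /andP[_ z2].
  by rewrite T_r_sqr_eq_id_mirror ?subrr ?normr0 // ltW.
Qed.

Lemma std_normal_neq0_ae : {ae P, forall o, Z o != 0}.
Proof.
exists (Z @^-1` [set 0]); split.
- exact: measurable_funPTI.
- have := Z_normal _ (measurable_set1 0); rewrite /distribution /pushforward => ->.
  apply/measure0_null_setP => //; apply: normal_prob_dominates => //.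
  by apply/measure0_null_setP => //; exact: lebesgue_measure_set1.
- by move=> o /= /negP/negbNE/eqP.
Qed.

End relaxed_thresholding_events.

Theorem proposition1 (d : measure_display) (Omega : measurableType d)
  (R : realType) (P : probability Omega R)
  (theta Z : {RV P >-> R}) (w : R) :
  0 < w ->
  std_normal_RV Z ->
  indep2 P theta Z ->
  (forall eps : R, 0 < eps ->
     (exists v : R, 0 < v /\
        (0 < P [set o | (`|T_r (theta o) (Z o) w v - T_h (theta o) w| < eps)%R])%E) /\
     (exists v : R, 0 < v /\
        (0 < P [set o | (`|T_r (theta o) (Z o) w v - theta o| < eps)%R])%E) /\
     (exists v : R, 0 < v /\
        (0 < P [set o | (`|T_r (theta o) (Z o) w v
                            - T_s (theta_star (theta o) w) w| < eps)%R])%E)) /\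
  {ae P, forall o, `|theta o| != w ->
     (fun v => T_r (theta o) (Z o) w v) @ 0^'+ --> T_h (theta o) w} /\
  {ae P, forall o,
     (fun v => T_r (theta o) (Z o) w v) @ +oo --> theta o}.
Proof.
move=> w0 Z_normal theta_Z_indep.
have w2 : 0 < w ^+ 2 by rewrite exprn_gt0.
split.
  move=> eps eps0; split; [|split]; exists (w ^+ 2); split => //.
  - exact: T_r_near_T_h_gt0.
  - exact: T_r_near_id_gt0.
  - under eq_set do rewrite T_s_theta_star ?ltW //.
    exact: T_r_near_id_gt0.
split; first by apply: aeW => o; exact: T_r_cvg_T_h.
by apply: filterS (std_normal_neq0_ae Z_normal) => o; exact: T_r_cvgy.
Qed.
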